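(* Let $\gamma$ be a Jordan curve in $\mathbb{R}^2$ and let $x\in\gamma$. Suppose there exists an open disk $D$ of radius $1$ with $x\in\partial D$ such that (1) there exists $\varepsilon>0$ with $B(x,\varepsilon)\cap\operatorname{Int}\gamma\subset D$, and (2) for every $\eta>0$ we have $\gamma\cap B(x,\eta)\cap D\neq\emptyset$. Then $\gamma$ does not have bounded convex curvature.
   Context: For a Jordan curve $\gamma$, $\operatorname{Int}\gamma$ denotes the bounded component of $\mathbb{R}^2\setminus\gamma$. $B(x,\varepsilon)$ is the open disk of center $x$ and radius $\varepsilon$. A Jordan curve $\gamma$ has bounded convex curvature if for every point $x\in\gamma$ there exist an open disk $U_x$ of radius $1$ and $\varepsilon_x>0$ such that $x\in\partial U_x$ and $B(x,\varepsilon_x)\cap U_x\subset\operatorname{Int}\gamma$. *)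

(* The plane R^2 is modelled as R * R (product
   topology); all disks are EUCLIDEAN disks, defined explicitly (the library
   norm on R * R is the max-norm). *)
From HB Require Import structures.
From mathcomp Require Import all_boot all_order all_algebra.
From mathcomp Require Import all_classical all_reals all_analysis.
Set Implicit Arguments. Unset Strict Implicit. Unset Printing Implicit Defensive.
Import Order.TTheory GRing.Theory Num.Theory.
Import numFieldNormedType.Exports.
Local Open Scope classical_set_scope.
Local Open Scope ring_scope.

Section Plane.
Variable R : realType.

Definition dist2 (p q : R * R) : R := (p.1 - q.1) ^+ 2 + (p.2 - q.2) ^+ 2.

Definition disk (c : R * R) (r : R) : set (R * R) := [set p | dist2 p c < r ^+ 2].

Definition circle (c : R * R) (r : R) : set (R * R) := [set p | dist2 p c = r ^+ 2].

(* A Jordan curve: the image of a continuous injective map from the circle,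
   parameterized as f : [0,1] -> R^2 continuous, f 0 = f 1, injective on [0,1). *)
Definition jordan_curve (g : set (R * R)) : Prop :=
  exists f : R -> R * R,
    {within `[0, 1], continuous f} /\ f 0 = f 1 /\
    {in `[0, 1[ &, injective f} /\ g = f @` `[0, 1].

(* Int g: the bounded component(s) of R^2 \ g (for a Jordan curve there is
   exactly one by the Jordan curve theorem). *)
Definition Int (g : set (R * R)) : set (R * R) :=
  [set p | ~ g p /\ bounded_set (connected_component (~` g) p)].

Definition bounded_convex_curvature (g : set (R * R)) : Prop :=
  forall x, g x -> exists c : R * R, circle c 1 x /\
    exists2 e : R, 0 < e & disk x e `&` disk c 1 `<=` Int g.

End Plane.

(* Bounded convex curvature at x yields a unit disk D' with x on its boundary
   and D' ∩ B(x, ε') ⊆ Int γ, hence D' ∩ B(x, r) ⊆ D for small r.  Two disks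
   of equal radius whose boundaries pass through x cannot be locally nested at
   x unless they coincide: moving x slightly in the direction from the centre
   of D to the centre of D' enters D' but leaves D.  So D' = D, and the points
   of γ in D arbitrarily close to x lie in Int γ, which misses γ. *)
From HB Require Import structures.
From mathcomp Require Import all_boot all_order all_algebra.
From mathcomp Require Import all_classical all_reals all_analysis.
From mathcomp Require Import ring lra.
Import Order.TTheory GRing.Theory Num.Theory.
Local Open Scope classical_set_scope.
Local Open Scope ring_scope.

Section EuclideanPlane.
Set Implicit Arguments.
Variable R : realType.
Implicit Types (p q c d x : R * R) (r s rho : R).

Lemma dist2_ge0 p q : 0 <= dist2 p q.
Proof. by rewrite /dist2 addr_ge0 ?sqr_ge0. Qed.

Lemma dist2_eq0 p q : dist2 p q = 0 -> p = q.
Proof.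
case: p q => [p1 p2] [q1 q2]; rewrite /dist2 /= => /eqP.
rewrite paddr_eq0 ?sqr_ge0 // !sqrf_eq0 !subr_eq0.
by case/andP => /eqP -> /eqP ->.
Qed.

Lemma subset_disk x r s : 0 <= r -> r <= s -> disk x r `<=` disk x s.
Proof.
move=> r0 rs p; rewrite /disk /= => /lt_le_trans; apply.
by rewrite lerXn2r // ?nnegrE (le_trans r0).
Qed.

Lemma disks_locally_nested_eq c d x rho r :
  circle c rho x -> circle d rho x -> 0 < r ->
  disk x r `&` disk d rho `<=` disk c rho -> d = c.
Proof.
move=> xc xd r0 sub_dc; apply: dist2_eq0; apply/eqP/negPn/negP => a_neq0.
set a := dist2 d c in a_neq0.
have a0 : 0 < a by rewrite lt0r a_neq0 dist2_ge0.
set t := Num.min (1 / 2) (r ^+ 2 / a).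
have t0 : 0 < t.
  by rewrite lt_min; apply/andP; split; [lra | rewrite divr_gt0 // exprn_gt0].
have t_le_half : t <= 1 / 2 by rewrite ge_min lexx.
have ta_le : t * a <= r ^+ 2.
  by rewrite -ler_pdivlMr // ge_min lexx orbT.
(* With a = |d - c|^2: |p - d|^2 = rho^2 - t a (1 - t) and |p - c|^2 = rho^2 + t a (1 + t). *)
set p := (x.1 + t * (d.1 - c.1), x.2 + t * (d.2 - c.2)).
have px : dist2 p x = t ^+ 2 * a by rewrite /dist2 /a /dist2 /=; ring.
have pd : dist2 p d = dist2 x d + t * (dist2 x c - dist2 x d - a) + t ^+ 2 * a.
  by rewrite /dist2 /a /dist2 /=; ring.
have pc : dist2 p c = dist2 x c + t * (dist2 x c - dist2 x d + a) + t ^+ 2 * a.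
  by rewrite /dist2 /a /dist2 /=; ring.
move: xc xd; rewrite /circle /= => xc xd.
have ta0 : 0 < t * a by rewrite mulr_gt0.
have t2a : t ^+ 2 * a = t * (t * a) by rewrite expr2 mulrA.
have : disk c rho p.
  by apply: sub_dc; rewrite /disk /= px pd xc xd t2a; split; nra.
by rewrite /disk /= pc xc xd t2a; nra.
Qed.

End EuclideanPlane.

Theorem lemma1 (R : realType) (g : set (R * R)) (x : R * R) :
  jordan_curve g -> g x ->
  (exists c : R * R, circle c 1 x /\
     (exists2 e : R, 0 < e & disk x e `&` Int g `<=` disk c 1) /\
     (forall eta : R, 0 < eta -> g `&` disk x eta `&` disk c 1 !=set0)) ->
  ~ bounded_convex_curvature g.
Proof.
move=> _ gx [c [xc [[e e0 Int_sub_c] g_near_x]]] /(_ x gx).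
case=> d [xd [eps eps0 d_sub_Int]].
set r := Num.min e eps.
have r0 : 0 < r by rewrite lt_min e0 eps0.
have r_e : r <= e by rewrite ge_min lexx.
have r_eps : r <= eps by rewrite ge_min lexx orbT.
have d_sub_Int_r : disk x r `&` disk d 1 `<=` Int g.
  by move=> p [pr pd]; apply: d_sub_Int; split=> //; exact: subset_disk (ltW r0) r_eps _ pr.
have dc : d = c.
  apply: (disks_locally_nested_eq xc xd r0) => p [pr pd].
  apply: Int_sub_c; split; first exact: subset_disk (ltW r0) r_e _ pr.
  exact: d_sub_Int_r.
subst d; have [y [[gy yr] yc]] := g_near_x r r0.
by have [/(_ gy)] := d_sub_Int_r y (conj yr yc).
Qed.
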